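(* The size $\gamma$ of the smallest string attractor satisfies the following lower bounds on its sensitivity (the alphabet being allowed to contain as many distinct characters as needed): substitutions: $\liminf_{n\to\infty}\mathsf{MS}_{\mathrm{sub}}(\gamma,n) \geq 2$, $\mathsf{AS}_{\mathrm{sub}}(\gamma,n) \geq \gamma-2$ and $\mathsf{AS}_{\mathrm{sub}}(\gamma,n)=\Omega(\sqrt{n})$; insertions: $\liminf_{n\to\infty}\mathsf{MS}_{\mathrm{ins}}(\gamma,n) \geq 2$, $\mathsf{AS}_{\mathrm{ins}}(\gamma,n) \geq \gamma-2$ and $\mathsf{AS}_{\mathrm{ins}}(\gamma,n)=\Omega(\sqrt{n})$; deletions: $\liminf_{n\to\infty}\mathsf{MS}_{\mathrm{del}}(\gamma,n) \geq 2$, $\mathsf{AS}_{\mathrm{del}}(\gamma,n) \geq \gamma-3$ and $\mathsf{AS}_{\mathrm{del}}(\gamma,n)=\Omega(\sqrt{n})$.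
   Context: Strings are finite sequences over an alphabet $\Sigma$; $\Sigma^n$ is the set of strings of length $n$; $\mathsf{ed}$ is the edit distance (single-character substitutions, insertions, deletions). For a measure $C$ on strings: $\mathsf{MS}_{\mathrm{sub}}(C,n)=\max_{T\in\Sigma^n}\{C(T')/C(T): T'\in\Sigma^n,\ \mathsf{ed}(T,T')=1\}$; $\mathsf{MS}_{\mathrm{ins}}$, $\mathsf{MS}_{\mathrm{del}}$ the same with $T'\in\Sigma^{n+1}$, resp. $\Sigma^{n-1}$; $\mathsf{AS}_{\ast}$ the same with $C(T')-C(T)$. A bound of the form ''$\mathsf{AS}(\gamma,n)\ge \gamma-c$'' means that there are strings $T$ (with $\gamma(T)$ arbitrarily large) and $T'$ with $\mathsf{ed}(T,T')=1$ of the relevant type such that $\gamma(T')-\gamma(T)\ge\gamma(T)-c$. A string attractor of $T$ is a set $\Gamma$ of positions of $T$ such that every substring of $T$ has an occurrence $T[i..j]$ with $\Gamma\cap[i,j]\neq\emptyset$; $\gamma(T)$ is the minimum size of a string attractor of $T$. *)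

From Stdlib Require Import Reals.
From mathcomp Require Import all_boot.

Set Implicit Arguments.
Unset Strict Implicit.
Unset Printing Implicit Defensive.

(* Alphabet: nat (as many distinct characters as needed).  Strings: seq nat. *)

Fixpoint ed (s t : seq nat) : nat :=
  match s with
  | [::] => size t
  | a :: s' =>
    let fix aux (t : seq nat) : nat :=
      match t with
      | [::] => (size s').+1
      | b :: t' => minn (minn (ed s' t).+1 (aux t').+1) (ed s' t' + (a != b))
      end
    in aux t
  end.

Definition is_attractor (T : seq nat) (G : {set 'I_(size T)}) : bool :=
  [forall i : 'I_(size T), forall j : 'I_(size T),
     (i <= j) ==>
     [exists i' : 'I_(size T),
        [&& i' + (j - i) < size T,
            take (j - i).+1 (drop i' T) == take (j - i).+1 (drop i T)
          & [exists k in G, (i' <= k) && (k <= i' + (j - i))]]]].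

(* gamma T = minimum size of a string attractor of T (the full position set is
   an attractor of size |T|, so the default value size T is never below it). *)
Definition gamma (T : seq nat) : nat :=
  \big[minn/size T]_(G : {set 'I_(size T)} | is_attractor G) #|G|.

Inductive edit_kind := ESub | EIns | EDel.

Definition new_len (k : edit_kind) (n : nat) : nat :=
  match k with ESub => n | EIns => n.+1 | EDel => n.-1 end.

Definition one_edit (k : edit_kind) (T T' : seq nat) : Prop :=
  ed T T' = 1 /\ size T' = new_len k (size T).

(* liminf_{n -> oo} MS_k(gamma, n) >= c, with MS_k(gamma,n) the maximum of
   gamma(T')/gamma(T) over T of length n and one-edit T', unfolded. *)
Definition MS_liminf_ge (k : edit_kind) (c : R) : Prop :=
  forall eps : R, Rlt 0 eps ->
  exists N : nat, forall n : nat, (N <= n)%N ->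
  exists T T' : seq nat, size T = n /\ one_edit k T T' /\
    Rle (Rminus c eps) (Rdiv (INR (gamma T')) (INR (gamma T))).

(* AS_k(gamma,n) >= gamma - c : there are T with gamma(T) arbitrarily large
   and one-edit T' with gamma(T') - gamma(T) >= gamma(T) - c. *)
Definition AS_ge_gamma_minus (k : edit_kind) (c : nat) : Prop :=
  forall m : nat, exists T T' : seq nat, one_edit k T T' /\
    (m <= gamma T)%N /\
    Rle (Rminus (INR (gamma T)) (INR c))
        (Rminus (INR (gamma T')) (INR (gamma T))).

Definition AS_Omega_sqrt (k : edit_kind) : Prop :=
  exists c : R, Rlt 0 c /\ exists N : nat, forall n : nat, (N <= n)%N ->
  exists T T' : seq nat, size T = n /\ one_edit k T T' /\
    Rle (Rmult c (sqrt (INR n))) (Rminus (INR (gamma T')) (INR (gamma T))).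

(* Let B_q = (q+3) 0^(q+1) 1 0^(g-q) and T = 0^L 1 0^(g+1) B_0 ... B_(g-1) with L > g, a
   string of length Theta(g^2).  The positions L-1 and L together with those of the g
   distinct letters q+3 form an attractor of T: a substring avoiding the letters q+3 is
   0^a or 0^a 1 0^b with a <= L and b <= g+1, so it has an occurrence ending at L-1 or
   crossing L.  Substituting 2 for the 1 at position L, inserting 2 before it, or deleting
   it destroys these occurrences: afterwards 0^(q+1) 1 0^(g-q) occurs only inside B_q and
   0^(g+1) only to the left of B_0.  These g substrings, the g letters q+3, the run
   0^(g+1) and (unless the 1 was deleted) the unique letter 2 have their occurrences in
   pairwise disjoint regions, so the edited string needs 2g+2 (resp. 2g+1) attractor
   positions, while g <= gamma T <= g+2.  Taking g ~ sqrt n gives all three bounds. *)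

From Stdlib Require Import Reals Lra.
From mathcomp Require Import all_boot zify.

Set Implicit Arguments.
Unset Strict Implicit.
Unset Printing Implicit Defensive.

Lemma ed_cons2 a s b t : ed (a :: s) (b :: t) =
  minn (minn (ed s (b :: t)).+1 (ed (a :: s) t).+1) (ed s t + (a != b)).
Proof. by []. Qed.

Lemma ed_refl s : ed s s = 0.
Proof.
elim: s => [|x s IH] //; apply/eqP; rewrite -leqn0.
by rewrite ed_cons2 eqxx addn0 IH geq_minr.
Qed.

Lemma ed_eq0 s t : ed s t = 0 -> s = t.
Proof.
elim: s t => [|x s IH] [|y t] //; rewrite ed_cons2 => /eqP.
rewrite -leqn0 !geq_min /= leqn0 addn_eq0 eqb0 negbK.
by case/andP=> /eqP/IH -> /eqP ->.
Qed.

Lemma ed_catl p s t : ed (p ++ s) (p ++ t) <= ed s t.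
Proof.
elim: p => [|x p IH] //; apply: leq_trans IH.
by rewrite !cat_cons ed_cons2 eqxx addn0 geq_minr.
Qed.

Lemma ed_subst1 x y s : ed (x :: s) (y :: s) <= 1.
Proof. by rewrite ed_cons2 ed_refl geq_min leq_b1 orbT. Qed.

Lemma ed_insert1 y s : ed s (y :: s) <= 1.
Proof. by case: s => [|x s] //; rewrite ed_cons2 ed_refl !geq_min leqnn !orbT. Qed.

Lemma ed_delete1 x s : ed (x :: s) s <= 1.
Proof. by case: s => [|y s] //; rewrite ed_cons2 ed_refl !geq_min leqnn. Qed.

Lemma one_editP k s t : ed s t <= 1 -> s <> t -> size t = new_len k (size s) ->
  one_edit k s t.
Proof.
move=> le1 neq; split=> //; apply/eqP; rewrite eqn_leq le1 lt0n.
by apply/eqP=> /ed_eq0.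
Qed.

Lemma one_edit_sub p x y s : x != y -> one_edit ESub (p ++ x :: s) (p ++ y :: s).
Proof.
move=> xy; apply: one_editP; rewrite ?size_cat //.
- exact: leq_trans (ed_catl _ _ _) (ed_subst1 _ _ _).
- by move/eqP; rewrite eqseq_cat // eqxx eqseq_cons (negbTE xy).
Qed.

Lemma one_edit_ins p y s : one_edit EIns (p ++ s) (p ++ y :: s).
Proof.
apply: one_editP; rewrite ?size_cat /= ?addnS //.
- exact: leq_trans (ed_catl _ _ _) (ed_insert1 _ _).
- by move/(congr1 size); rewrite !size_cat /=; lia.
Qed.

Lemma one_edit_del p x s : one_edit EDel (p ++ x :: s) (p ++ s).
Proof.
apply: one_editP; rewrite ?size_cat /= ?addnS //.
- exact: leq_trans (ed_catl _ _ _) (ed_delete1 _ _).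
- by move/(congr1 size); rewrite !size_cat /=; lia.
Qed.

Lemma exists_or_forall_in (P : pred nat) i k :
  (exists2 x, i <= x <= i + k & P x) \/ (forall x, i <= x <= i + k -> ~~ P x).
Proof.
have mem x : (x \in iota i k.+1) = (i <= x <= i + k) by rewrite mem_iota addnS ltnS.
case: (boolP (has P (iota i k.+1))) => [/hasP [x] | /hasPn none]; rewrite ?mem.
  by left; exists x.
by right=> x; rewrite -mem; apply: none.
Qed.

Lemma nth_nseq_cat L tl x :
  nth 0 (nseq L 0 ++ tl) x = if x < L then 0 else nth 0 tl (x - L).
Proof. by rewrite nth_cat size_nseq nth_nseq; case: ltnP. Qed.

Definition occurs_at (S : seq nat) i k j :=
  j + k < size S /\ forall t, t <= k -> nth 0 S (j + t) = nth 0 S (i + t).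

Lemma take_drop_eqP (S : seq nat) i j k : i + k < size S -> j + k < size S ->
  reflect (forall t, t <= k -> nth 0 S (j + t) = nth 0 S (i + t))
          (take k.+1 (drop j S) == take k.+1 (drop i S)).
Proof.
move=> ik jk; apply: (iffP eqP) => [E t tk | E].
  by have := congr1 (nth 0 ^~ t) E; rewrite !nth_take // !nth_drop.
apply: (@eq_from_nth _ 0) => [|t]; rewrite !size_takel ?size_drop //; try lia.
by move=> tk; rewrite !nth_take // !nth_drop E.
Qed.

Lemma bigmin_le (I : eqType) (r : seq I) (P : pred I) (F : I -> nat) x0 j :
  j \in r -> P j -> \big[minn/x0]_(i <- r | P i) F i <= F j.
Proof.
elim: r => [|i r IH] //; rewrite inE big_cons => /orP [/eqP <- -> | jr Pj].
  exact: geq_minl.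
by case: (P i); [apply: leq_trans (geq_minr _ _) _|]; apply: IH.
Qed.

Lemma gamma_le_attractor S (G : {set 'I_(size S)}) : is_attractor G -> gamma S <= #|G|.
Proof. by move=> attrG; apply: bigmin_le; rewrite ?mem_index_enum. Qed.

Lemma attractor_setT S : is_attractor [set: 'I_(size S)].
Proof.
apply/forallP=> i; apply/forallP=> j; apply/implyP=> ij; apply/existsP; exists i.
apply/and3P; split=> //; first by have := ltn_ord j; lia.
by apply/existsP; exists i; rewrite in_setT leqnn leq_addr.
Qed.

Lemma gamma_geP S K : (forall G : {set 'I_(size S)}, is_attractor G -> K <= #|G|) ->
  K <= gamma S.
Proof.
move=> ge; rewrite /gamma; elim/big_rec: _ => [|G m attrG Km]; last by rewrite leq_min ge.
by have := ge _ (attractor_setT S); rewrite cardsT card_ord.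
Qed.

Lemma attractor_hits S (G : {set 'I_(size S)}) i k :
  is_attractor G -> i + k < size S ->
  exists j (x : 'I_(size S)), [/\ occurs_at S i k j, x \in G & j <= x <= j + k].
Proof.
move=> /forallP attrG ik; have i_lt : i < size S by lia.
move: (attrG (Ordinal i_lt)) => /forallP /(_ (Ordinal ik)) /implyP /=.
rewrite leq_addr addKn => /(_ isT) /existsP [j /and3P [jk /take_drop_eqP E]].
by case/existsP=> x /andP [xG jx]; exists j, x; split=> //; split=> // t /E ->.
Qed.

Lemma gamma_le_hitting S (X : seq nat) :
  (forall i k, i + k < size S ->
     exists j, occurs_at S i k j /\ exists2 x, x \in X & j <= x <= j + k) ->
  gamma S <= size X.
Proof.
move=> hit; pose G : {set 'I_(size S)} := [set x in pmap insub X].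
have attrG : is_attractor G.
  apply/forallP=> i; apply/forallP=> j; apply/implyP=> ij.
  have [|j' [[jk E] [x xX jx]]] := hit i (j - i); first by have := ltn_ord j; lia.
  have j'_lt : j' < size S by lia.
  have x_lt : x < size S by lia.
  apply/existsP; exists (Ordinal j'_lt); apply/and3P; split=> //=.
    apply/take_drop_eqP=> //; have := ltn_ord j; lia.
  by apply/existsP; exists (Ordinal x_lt); rewrite inE mem_pmap_sub /= xX.
apply: leq_trans (gamma_le_attractor attrG) _.
rewrite cardsE; apply: leq_trans (card_size _) _.
by rewrite size_pmap_sub count_size.
Qed.

Definition separated S K (s k : nat -> nat) (P : nat -> pred nat) :=
  [/\ forall m, m < K -> s m + k m < size S,
      forall m j x, m < K -> occurs_at S (s m) (k m) j -> j <= x <= j + k m -> P m x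
    & forall m m' x, m < K -> m' < K -> P m x -> P m' x -> m = m'].

Lemma gamma_ge_separated S K s k P : separated S K s k P -> K <= gamma S.
Proof.
case=> valid confined disj; apply: gamma_geP => G attrG.
pose owner (x : 'I_(size S)) := [pick m : 'I_K | P m x].
have owned (m : 'I_K) : Some m \in [set owner x | x in G].
  have [j [x [occ xG jx]]] := attractor_hits attrG (valid m (ltn_ord m)).
  have Pmx := confined m j x (ltn_ord m) occ jx.
  apply/imsetP; exists x => //; rewrite /owner.
  case: pickP => [m' Pm'x | /(_ m)]; last by rewrite Pmx.
  by congr Some; apply: val_inj; apply: disj (ltn_ord m) (ltn_ord m') Pmx Pm'x.
apply: (@leq_trans #|[set Some m | m : 'I_K]|).
  by rewrite card_imset ?card_ord //; apply: Some_inj.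
apply: (leq_trans _ (leq_imset_card owner G)); apply: subset_leq_card.
by apply/subsetP=> _ /imsetP [m _ ->].
Qed.

Lemma separated_cat S K1 s1 k1 P1 K2 s2 k2 P2 :
  separated S K1 s1 k1 P1 -> separated S K2 s2 k2 P2 ->
  (forall m m' x, m < K1 -> m' < K2 -> P1 m x -> P2 m' x -> False) ->
  separated S (K1 + K2) (fun m => if m < K1 then s1 m else s2 (m - K1))
    (fun m => if m < K1 then k1 m else k2 (m - K1))
    (fun m => if m < K1 then P1 m else P2 (m - K1)).
Proof.
case=> valid1 conf1 disj1 [valid2 conf2 disj2] disj12; split.
- by move=> m mK; case: ifP => m1; [apply: valid1 | apply: valid2; lia].
- by move=> m j x mK; case: ifP => m1; [apply: conf1 | apply: conf2; lia].
- move=> m m' x mK m'K; case: ifP => m1; case: ifP => m'1 Px P'x.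
  + exact: disj1 Px P'x.
  + by case: (disj12 m (m' - K1) x) => //; lia.
  + by case: (disj12 m' (m - K1) x) => //; lia.
  + by have := disj2 (m - K1) (m' - K1) x; lia.
Qed.

Lemma separated1 S i k (P : pred nat) : i + k < size S ->
  (forall j x, occurs_at S i k j -> j <= x <= j + k -> P x) ->
  separated S 1 (fun _ => i) (fun _ => k) (fun _ => P).
Proof. by move=> ik conf; split=> // [m j x _|m m' x]; [apply: conf | lia]. Qed.

(* [rest g] is 0^(g+1) B_0 ... B_(g-1) with B_q = (q+3) 0^(q+1) 1 0^(g-q), a block
   of length g+3; [rest_char g y] is its letter at position y, and in [pre ++ rest g]
   the block B_q starts at position [dpos pre g q]. *)
Definition rest_len g := g.+1 + g * g.+3.

Definition rest_char g y :=
  if y < g.+1 then 0 else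
  let q := (y - g.+1) %/ g.+3 in let r := (y - g.+1) %% g.+3 in
  if r == 0 then q + 3 else (r == q.+2 : nat).

Definition rest g := mkseq (rest_char g) (rest_len g).

Definition free_of_01 (s : seq nat) :=
  forall x, x.+1 < size s -> nth 0 s x.+1 = 1 -> nth 0 s x != 0.

Section WithRest.

Variables (pre : seq nat) (g : nat).

Local Notation S := (pre ++ rest g).
Local Notation c x := (nth 0 (pre ++ rest g) x).

Definition dpos q := size pre + g.+1 + q * g.+3.

Lemma size_with_rest : size S = dpos g.
Proof. by rewrite size_cat size_mkseq /dpos /rest_len addnA. Qed.

Lemma ltn_dpos q q' : (dpos q < dpos q') = (q < q').
Proof. by rewrite /dpos ltn_add2l ltn_pmul2r. Qed.

Lemma leq_dpos q q' : (dpos q <= dpos q') = (q <= q').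
Proof. by rewrite /dpos leq_add2l leq_pmul2r. Qed.

Lemma dpos0 : dpos 0 = size pre + g.+1.
Proof. by rewrite /dpos mul0n addn0. Qed.

Lemma dposS q : dpos q.+1 = dpos q + g.+3.
Proof. by rewrite /dpos mulSn; lia. Qed.

Lemma dpos_gap q q' : q < q' -> dpos q + g.+3 <= dpos q'.
Proof. by rewrite -dposS leq_dpos. Qed.

Lemma nth_with_rest_pre x : x < size pre -> c x = nth 0 pre x.
Proof. by move=> x_lt; rewrite nth_cat x_lt. Qed.

Lemma nth_with_rest x : size pre <= x < dpos g -> c x = rest_char g (x - size pre).
Proof.
case/andP=> x_ge x_lt; rewrite nth_cat ltnNge x_ge /= nth_mkseq //.
by move: x_lt; rewrite /dpos /rest_len; lia.
Qed.

Lemma nth_with_rest_gap x : size pre <= x < dpos 0 -> c x = 0.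
Proof.
case/andP=> x_ge x_lt; have x_lt' : x < dpos g by rewrite (leq_trans x_lt) ?leq_dpos.
by rewrite nth_with_rest ?x_ge // /rest_char ifT //; move: x_lt; rewrite /dpos; lia.
Qed.

Lemma nth_block_offset q r : q < g -> r < g.+3 ->
  c (dpos q + r) = if r == 0 then q + 3 else (r == q.+2 : nat).
Proof.
move=> q_lt r_lt; have q1 : dpos q.+1 <= dpos g by rewrite leq_dpos.
rewrite nth_with_rest; last by rewrite dposS in q1; move: q1; rewrite /dpos; lia.
have -> : dpos q + r - size pre = g.+1 + (q * g.+3 + r) by rewrite /dpos; lia.
by rewrite /rest_char ifF ?addKn ?divnMDl ?modnMDl ?divn_small ?modn_small ?addn0 //; lia.
Qed.

Lemma nth_dpos q : q < g -> c (dpos q) = q + 3.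
Proof. by move=> q_lt; rewrite -[dpos q]addn0 nth_block_offset. Qed.

Lemma nth_block q x : q < g -> dpos q < x <= dpos q + g.+2 ->
  c x = (x == dpos q + q.+2 : nat).
Proof.
move=> q_lt x_in; have -> : x = dpos q + (x - dpos q) by lia.
by rewrite nth_block_offset ?eqn_add2l ?ifF //; try lia; apply/eqP; lia.
Qed.

Lemma block_cover x : dpos 0 <= x -> x < dpos g ->
  exists2 q, q < g & dpos q <= x <= dpos q + g.+2.
Proof.
move=> x_ge x_lt; exists ((x - dpos 0) %/ g.+3).
  by rewrite ltn_divLR //; move: x_ge x_lt; rewrite /dpos; lia.
have := divn_eq (x - dpos 0) g.+3; have := ltn_mod (x - dpos 0) g.+3.
move: x_ge; rewrite /dpos mul0n addn0.
set q := (_ %/ _); set r := (_ %% _); lia.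
Qed.

Lemma nth_after_pre x : size pre <= x -> c x <= 1 \/ exists2 q, q < g & x = dpos q.
Proof.
move=> x_ge; case: (ltnP x (dpos 0)) => [x_lt | x_ge0].
  by left; rewrite nth_with_rest_gap ?x_ge.
case: (ltnP x (dpos g)) => [x_lt | x_ge1]; last by left; rewrite nth_default ?size_with_rest.
have [q q_lt /andP [qx xq]] := block_cover x_ge0 x_lt.
case: (ltngtP (dpos q) x) => [q_x | x_q | <-]; [| lia | by right; exists q].
by left; rewrite (nth_block q_lt) ?q_x ?xq ?leq_b1.
Qed.

Lemma nth_ge3 x : size pre <= x -> 3 <= c x -> exists2 q, q < g & x = dpos q.
Proof. by move=> x_ge; case: (nth_after_pre x_ge) => // small; lia. Qed.

Lemma nth_neq2 x : size pre <= x -> c x != 2.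
Proof.
move=> x_ge; case: (nth_after_pre x_ge) => [small | [q q_lt ->]]; first lia.
by rewrite nth_dpos // addn3.
Qed.

Lemma window_in_block i k : dpos 0 <= i -> i + k < dpos g ->
  (forall x, i <= x <= i + k -> c x < 3) ->
  exists2 q, q < g & dpos q < i /\ i + k <= dpos q + g.+2.
Proof.
move=> i_ge ik_lt small.
have [q q_lt /andP [qi iq]] := block_cover i_ge (leq_ltn_trans (leq_addr k i) ik_lt).
exists q => //; split.
  rewrite ltn_neqAle qi andbT; apply/eqP=> qi_eq.
  by have := small i; rewrite leqnn leq_addr -qi_eq nth_dpos //; lia.
rewrite leqNgt; apply/negP=> big.
have q1_lt : q.+1 < g by rewrite -ltn_dpos dposS; lia.
by have := small (dpos q.+1); rewrite nth_dpos // dposS; lia.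
Qed.

Lemma separated_dpos : all (fun a => a < 3) pre ->
  separated S g dpos (fun _ => 0) (fun q x => x == dpos q).
Proof.
move=> /all_nthP pre_small; split.
- by move=> q q_lt; rewrite addn0 size_with_rest ltn_dpos.
- move=> q j x q_lt [_ occ] jx; have -> : x = j by lia.
  have := occ 0 (leqnn 0); rewrite !addn0 nth_dpos // => cj.
  case: (ltnP j (size pre)) => [j_lt | j_ge].
    by have := pre_small 0 j j_lt; rewrite -nth_with_rest_pre // cj; lia.
  have: 3 <= c j by rewrite cj leq_addl.
  case/(nth_ge3 j_ge) => q' q'_lt j_eq.
  by move: cj; rewrite j_eq nth_dpos // => /addIn ->.
- move=> q q' x _ _ /eqP -> /eqP /eqP.
  by rewrite eqn_leq !leq_dpos -eqn_leq => /eqP.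
Qed.

Lemma separated_blocks : free_of_01 pre ->
  separated S g (fun q => (dpos q).+1) (fun _ => g.+1)
    (fun q x => dpos q < x <= dpos q + g.+2).
Proof.
move=> no01; split.
- by move=> q q_lt; rewrite size_with_rest; have := dpos_gap q_lt; lia.
- move=> q j x q_lt [+ occ] jx; rewrite size_with_rest => jk_lt.
  have win t : t <= g.+1 -> c (j + t) = (t == q.+1 : nat).
    by move=> tg; rewrite occ // (nth_block q_lt) ?addSnnS ?eqn_add2l //; lia.
  have one : c (j + q.+1) = 1 by rewrite win ?eqxx //; lia.
  have zero : c (j + q) = 0 by rewrite win ?ltn_eqF //; lia.
  have small y : j <= y <= j + g.+1 -> c y < 3.
    by move=> jy; rewrite -(subnKC (proj1 (andP jy))) win; [case: eqP | lia].
  have pre_le : size pre <= j + q.+1.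
    rewrite leqNgt; apply/negP=> lt; move: (no01 (j + q)); rewrite -addnS => /(_ lt).
    by rewrite -!nth_with_rest_pre ?one ?zero //; lia.
  have j_ge : dpos 0 <= j.
    rewrite leqNgt; apply/negP=> j_lt.
    case: (ltnP (j + q.+1) (dpos 0)) => p_lt.
      by move: one; rewrite nth_with_rest_gap ?pre_le.
    by have := small (dpos 0); rewrite nth_dpos; lia.
  have [q' q'_lt [jq' jkq']] := window_in_block j_ge jk_lt small.
  move: one; rewrite (nth_block q'_lt); last lia.
  case: eqP => // p_eq _; have q_eq : q' = q by lia.
  by subst q'; lia.
- move=> q q' x q_lt q'_lt /andP [lo hi] /andP [lo' hi'].
  by case: (ltngtP q q') => // [lt | gt]; [have := dpos_gap lt | have := dpos_gap gt]; lia.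
Qed.

Lemma separated_zero_run :
  separated S 1 (fun _ => size pre) (fun _ => g) (fun _ x => (x < dpos 0) && (c x == 0)).
Proof.
have d0g : dpos 0 <= dpos g by rewrite leq_dpos.
rewrite dpos0 in d0g.
apply: separated1 => [|j x [+ occ] jx]; rewrite size_with_rest; first lia.
move=> jg_lt.
have zero t : t <= g -> c (j + t) = 0.
  by move=> tg; rewrite occ // nth_with_rest_gap // dpos0; lia.
have small y : j <= y <= j + g -> c y < 3.
  by move=> jy; rewrite -(subnKC (proj1 (andP jy))) zero //; lia.
suff j_le : j <= size pre.
  by rewrite -(subnKC (proj1 (andP jx))) zero; [rewrite eqxx andbT dpos0|]; lia.
rewrite leqNgt; apply/negP=> j_gt.
case: (ltnP (dpos 0) j) => j_d0.
  have [q q_lt [qj jq]] := window_in_block (ltnW j_d0) jg_lt small.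
  have := zero (dpos q + q.+2 - j); rewrite subnKC; last lia.
  by rewrite (nth_block q_lt) ?eqxx //=; lia.
have g_pos : 0 < g by rewrite -(ltn_dpos 0); move: j_gt; rewrite dpos0; lia.
by have := zero (dpos 0 - j); rewrite subnKC ?nth_dpos //; move: j_gt; rewrite dpos0; lia.
Qed.

Lemma separated_mark L : L < size pre ->
  (forall x, x < size pre -> (nth 0 pre x == 2) = (x == L)) ->
  separated S 1 (fun _ => L) (fun _ => 0) (fun _ x => x == L).
Proof.
move=> L_lt mark; apply: separated1 => [|j x [_ occ] jx]; first by rewrite size_cat; lia.
have -> : x = j by lia.
have := occ 0 (leqnn 0); rewrite !addn0 (nth_with_rest_pre L_lt) => cj.
have cL : nth 0 pre L = 2 by apply/eqP; rewrite mark ?eqxx.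
case: (ltnP j (size pre)) => [j_lt | j_ge].
  by rewrite -(mark _ j_lt) -nth_with_rest_pre // cj cL.
by have := nth_neq2 j_ge; rewrite cj cL.
Qed.

Lemma gamma_with_rest_ge K s k P : all (fun a => a < 3) pre -> free_of_01 pre ->
  separated S K s k P -> (forall m x, m < K -> P m x -> x < dpos 0) ->
  K + (g + g) <= gamma S.
Proof.
move=> pre_small no01 sepK leftK.
apply: gamma_ge_separated; apply: (separated_cat sepK).
  apply: separated_cat (separated_dpos pre_small) (separated_blocks no01) _.
  move=> q q' x _ _ /eqP -> /andP [lo hi]; case: (leqP q q') => [le | lt].
    by move: lo; rewrite ltnNge leq_dpos le.
  by have := dpos_gap lt; lia.
move=> m m' x m_lt _ /(leftK _ _ m_lt) x_lt.
have d0 q : dpos 0 <= dpos q by rewrite leq_dpos.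
case: ifP => _; first by move/eqP=> x_eq; have := d0 m'; lia.
by case/andP=> lo _; have := d0 (m' - g); lia.
Qed.

Lemma gamma_with_rest_lb : all (fun a => a < 3) pre -> free_of_01 pre ->
  (g + g).+1 <= gamma S.
Proof.
move=> pre_small no01.
apply: leq_trans (gamma_with_rest_ge pre_small no01 separated_zero_run _) => //.
by move=> m x _ /andP [].
Qed.

Lemma gamma_with_rest_mark_lb L : all (fun a => a < 3) pre -> free_of_01 pre ->
  L < size pre -> (forall x, x < size pre -> (nth 0 pre x == 2) = (x == L)) ->
  (g + g).+2 <= gamma S.
Proof.
move=> pre_small no01 L_lt mark.
have cL : c L = 2 by rewrite nth_with_rest_pre //; apply/eqP; rewrite mark.
have L_lt' : L < dpos 0 by rewrite dpos0; lia.
have sep := separated_cat (separated_mark L_lt mark) separated_zero_run.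
apply: leq_trans (gamma_with_rest_ge pre_small no01 (sep _) _) => //.
  by move=> m m' x _ _ /eqP -> /andP [_]; rewrite cL.
by move=> m x _; case: ifP => _; [move/eqP=> -> | case/andP].
Qed.

End WithRest.

Definition base g L := (nseq L 0 ++ [:: 1]) ++ rest g.

Definition edited_tail k := match k with ESub => [:: 2] | EIns => [:: 2; 1] | EDel => [::] end.

Definition edited k g L := (nseq L 0 ++ edited_tail k) ++ rest g.

Definition marked k : nat := if k is EDel then 0 else 1.

Lemma one_edit_edited k g L : one_edit k (base g L) (edited k g L).
Proof.
rewrite /base /edited -!catA; case: k => /=.
- exact: one_edit_sub.
- exact: one_edit_ins.
- exact: one_edit_del.
Qed.

Lemma gamma_edited_ge k g L : (g + g).+1 + marked k <= gamma (edited k g L).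
Proof.
have small : all (fun a => a < 3) (nseq L 0 ++ edited_tail k).
  by rewrite all_cat all_nseq orbT; case: k.
have no01 : free_of_01 (nseq L 0 ++ edited_tail k).
  move=> x _; rewrite !nth_nseq_cat; case: (ltnP x.+1 L) => [_ | Lx]; first by [].
  case: k {small} => /=; case E: (x.+1 - L) => [|[|[]]] //= _.
  have -> : x = L by lia.
  by rewrite ltnn subnn.
have mark x : k <> EDel -> (nth 0 (nseq L 0 ++ edited_tail k) x == 2) = (x == L).
  move=> k_ne; rewrite nth_nseq_cat; case: (ltnP x L) => Lx; first by rewrite (ltn_eqF Lx).
  have [-> | x_ne] := eqVneq x L; first by rewrite subnn; case: k k_ne {small no01}.
  have [n ->] : exists n, x = L + n.+1 by exists (x - L).-1; lia.
  by rewrite addKn; case: k {small no01 k_ne} => //=; case: n => [|[]].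
rewrite /edited /marked; case: k small no01 mark => small no01 mark.
- rewrite addn1; apply: gamma_with_rest_mark_lb small no01 _ (fun x _ => mark x _) => //.
  by rewrite size_cat size_nseq addn1.
- rewrite addn1; apply: gamma_with_rest_mark_lb small no01 _ (fun x _ => mark x _) => //.
  by rewrite size_cat size_nseq addn2 ltnS leqnSn.
- by rewrite addn0; apply: gamma_with_rest_lb small no01.
Qed.

Lemma size_base g L : size (base g L) = L.+1 + rest_len g.
Proof. by rewrite !size_cat size_nseq size_mkseq addn1. Qed.

Lemma gamma_base_ge g L : g <= gamma (base g L).
Proof.
apply: gamma_ge_separated (separated_dpos g _).
by rewrite all_cat all_nseq orbT.
Qed.

Section BaseUpperBound.

Variables g L : nat.
Hypothesis gL : g < L.

Local Notation c x := (nth 0 (base g L) x).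
Local Notation dpos := (dpos (nseq L 0 ++ [:: 1]) g).

Lemma base_dpos0 : dpos 0 = L + g.+2.
Proof. by rewrite dpos0 size_cat size_nseq addn1 addSnnS. Qed.

Lemma base_head x : x < dpos 0 -> c x = (x == L : nat).
Proof.
move=> x_lt; case: (ltnP x L.+1) => [x_le | x_gt].
  rewrite nth_with_rest_pre ?size_cat ?size_nseq ?addn1 // nth_nseq_cat.
  case: ltnP => [x_ltL | Lx]; first by rewrite ltn_eqF.
  have -> : x = L by lia.
  by rewrite subnn eqxx.
rewrite nth_with_rest_gap ?size_cat ?size_nseq ?addn1 ?x_gt //.
by rewrite gtn_eqF.
Qed.

Lemma base_window_one i k : i + k < size (base g L) ->
  (forall x, i <= x <= i + k -> c x < 3) ->
  exists p, [/\ c p = 1, p <= i + L, i + k <= p + g.+1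
             & forall x, i <= x <= i + k -> x != p -> c x = 0].
Proof.
rewrite size_with_rest => ik_lt small.
case: (ltnP i (dpos 0)) => [i_lt | i_ge].
  have ik_lt0 : i + k < dpos 0.
    rewrite ltnNge; apply/negP=> d0_le.
    have g_pos : 0 < g by rewrite -(@ltn_dpos (nseq L 0 ++ [:: 1]) g); lia.
    by have := small (dpos 0); rewrite nth_dpos //; lia.
  exists L; rewrite base_head ?eqxx; last by rewrite base_dpos0; lia.
  split=> [//|||x ix /negbTE x_ne]; [lia | by move: ik_lt0; rewrite base_dpos0; lia |].
  by rewrite base_head ?x_ne //; lia.
have [q q_lt [qi iq]] := window_in_block i_ge ik_lt small.
exists (dpos q + q.+2); rewrite (nth_block q_lt) ?eqxx; [|lia].
split=> [//||| x ix /negbTE x_ne]; try lia.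
by rewrite (nth_block q_lt) ?x_ne //; lia.
Qed.

Lemma gamma_base_le : gamma (base g L) <= g.+2.
Proof.
have -> : g.+2 = size [:: L.-1, L & map dpos (iota 0 g)] by rewrite /= size_map size_iota.
have size_lt : L + g.+1 < size (base g L) by rewrite size_base /rest_len; lia.
apply: gamma_le_hitting => i k ik_lt.
have [[x ix big] | small] := exists_or_forall_in (fun x => 2 < c x) i k.
  exists i; split=> //; have x_ge : size (nseq L 0 ++ [:: 1]) <= x.
    rewrite size_cat size_nseq addn1 leqNgt; apply/negP=> x_lt.
    by move: big; rewrite base_head ?base_dpos0; [case: eqP | lia].
  have [q q_lt x_eq] := nth_ge3 x_ge big.
  by exists x; rewrite // !inE x_eq map_f ?orbT // mem_iota.
have small3 x : i <= x <= i + k -> c x < 3 by move/small; rewrite -leqNgt.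
have [p [cp p_le p_ge zero]] := base_window_one ik_lt small3.
have win t : t <= k -> c (i + t) = (i + t == p : nat).
  by move=> tk; case: eqP => [-> // | /eqP ne]; apply: zero; lia.
have [p_in | p_out] := boolP (i <= p <= i + k).
  exists (L - (p - i)); split.
    split=> [|t tk]; first lia.
    rewrite win // base_head ?base_dpos0; last lia.
    by congr nat_of_bool; apply/eqP/eqP; lia.
  by exists L; rewrite ?inE ?eqxx ?orbT //; lia.
have k_lt : k < L by move: p_out; rewrite negb_and -!ltnNge; case/orP; lia.
exists (L.-1 - k); split.
  split=> [|t tk]; first lia.
  rewrite win // base_head ?base_dpos0; last lia.
  by congr nat_of_bool; apply/eqP/eqP; lia.
by exists L.-1; rewrite ?inE ?eqxx //; lia.
Qed.

End BaseUpperBound.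

Lemma exists_base_of_size n G0 : (G0 + 4) * (G0 + 4) <= n ->
  exists g L, [/\ G0 <= g, g < L, size (base g L) = n & n < (g + 5) * (g + 5)].
Proof.
move=> n_ge; have [sq_le lt_sq] := Nat.sqrt_spec n (Nat.le_0_l n).
have G0_le : G0 + 4 <= Nat.sqrt n by apply: contraTT n_ge; rewrite -!ltnNge; nia.
exists (Nat.sqrt n - 4), (n - (rest_len (Nat.sqrt n - 4)).+1).
by rewrite size_base /rest_len; split; nia.
Qed.

Section Sensitivity.

Local Open Scope R_scope.

Lemma MS_liminf_ge_2 k : MS_liminf_ge k (INR 2).
Proof.
move=> eps eps_pos; have [G0 G0_big] := INR_archimed eps 3 eps_pos.
exists ((G0 + 4) * (G0 + 4))%N => n n_ge.
have [g [L [G0g gL size_n _]]] := exists_base_of_size n_ge.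
exists (base g L), (edited k g L); do 2!split=> //; first exact: one_edit_edited.
have hi := le_INR _ _ (leP (gamma_base_le gL)).
have ed := le_INR _ _ (leP (leq_trans (leq_addr _ _) (gamma_edited_ge k g L))).
have G0b := le_INR _ _ (leP (leq_trans G0g (gamma_base_ge g L))).
rewrite !S_INR plus_INR in hi ed.
have b_pos : 0 < INR (gamma (base g L)) by nra.
rewrite -(Rmult_div_l (INR 2 - eps) (INR (gamma (base g L)))); last lra.
rewrite !Rdiv_def; apply: Rmult_le_compat_r; first exact/Rlt_le/Rinv_0_lt_compat.
have := Rmult_le_compat_l eps _ _ (Rlt_le _ _ eps_pos) G0b.
rewrite /= in G0_big *; nra.
Qed.

Lemma AS_ge_gamma_minus_edited k : AS_ge_gamma_minus k (3 - marked k).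
Proof.
move=> m; exists (base m m.+1), (edited k m m.+1); split; first exact: one_edit_edited.
split; first exact: gamma_base_ge.
have lo := gamma_edited_ge k m m.+1; have hi := gamma_base_le (ltnSn m).
have : (gamma (base m m.+1) + gamma (base m m.+1) <=
        gamma (edited k m m.+1) + (3 - marked k))%N by case: k lo => /= lo; lia.
by move/leP/le_INR; rewrite !plus_INR; lra.
Qed.

Lemma AS_Omega_sqrt_edited k : AS_Omega_sqrt k.
Proof.
exists (1 / 2); split; first lra.
exists ((7 + 4) * (7 + 4))%N => n n_ge.
have [g [L [g_ge gL size_n n_lt]]] := exists_base_of_size n_ge.
exists (base g L), (edited k g L); do 2!split=> //; first exact: one_edit_edited.
have gain : (g + gamma (base g L) <= gamma (edited k g L) + 1)%N.
  by have := gamma_base_le gL; have := gamma_edited_ge k g L; lia.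
have sqrt_n : sqrt (INR n) <= INR (g + 5).
  rewrite -[INR (g + 5)]sqrt_square; last exact: pos_INR.
  by rewrite -mult_INR; apply/sqrt_le_1_alt/le_INR/leP/ltnW.
move/leP/le_INR: gain; move/leP/le_INR: g_ge.
rewrite !plus_INR [INR 7]/= [INR 1]/= [INR 5]/= in sqrt_n *; lra.
Qed.

End Sensitivity.

Theorem mainTheorem3 :
  (MS_liminf_ge ESub (INR 2) /\ AS_ge_gamma_minus ESub 2 /\ AS_Omega_sqrt ESub) /\
  (MS_liminf_ge EIns (INR 2) /\ AS_ge_gamma_minus EIns 2 /\ AS_Omega_sqrt EIns) /\
  (MS_liminf_ge EDel (INR 2) /\ AS_ge_gamma_minus EDel 3 /\ AS_Omega_sqrt EDel).
Proof.
have sensitivity k :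
    MS_liminf_ge k (INR 2) /\ AS_ge_gamma_minus k (3 - marked k) /\ AS_Omega_sqrt k.
  split; first exact: MS_liminf_ge_2.
  by split; [exact: AS_ge_gamma_minus_edited | exact: AS_Omega_sqrt_edited].
by split; [|split]; apply: sensitivity.
Qed.
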